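(* Let $\{\mathcal H,\Gamma_0,\Gamma_1\}$ be a unitary boundary triple for $A^*$ with Weyl function $M(\cdot)$. Then the mapping $\Gamma_0$ (from $\mathfrak H^2$ to $\mathcal H$) is closable if and only if for some (equivalently, for every) $\lambda\in\mathbb C\setminus\mathbb R$ the following holds: whenever $h_n\in\operatorname{dom}M(\lambda)$, $h_n\to h$ in $\mathcal H$ and $\operatorname{Im}(M(\lambda)h_n,h_n)\to0$ as $n\to\infty$, then $h=0$.
   Context: $A$ is a closed symmetric relation in $\mathfrak H$. A unitary boundary triple for $A^*$: a linear operator $\Gamma=\{\Gamma_0,\Gamma_1\}$ from $\mathfrak H^2$ to $\mathcal H^2$ with $\operatorname{dom}\Gamma\subset A^*$ dense in $A^*$ such that $\Gamma^{-1}=\Gamma^{[*]}$, where $\Gamma^{[*]}=\{\{\{k,k'\},\{g,g'\}\}:(f',g)-(f,g')=(h',k)-(h,k')\text{ for all }\{\{f,f'\},\{h,h'\}\}\in\Gamma\}$. Weyl function: $M(\lambda)\Gamma_0\hat f_\lambda=\Gamma_1\hat f_\lambda$ for $\hat f_\lambda=\{f_\lambda,\lambda f_\lambda\}\in\operatorname{dom}\Gamma$. Closable means that the closure of the graph of $\Gamma_0$ in $\mathfrak H^2\times\mathcal H$ is the graph of an operator. *)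

From Stdlib Require Import Reals.
Open Scope R_scope.

Record Cx := mkCx { Cre : R; Cim : R }.
Definition C0 : Cx := mkCx 0 0.
Definition C1 : Cx := mkCx 1 0.
Definition Cadd (a b : Cx) : Cx := mkCx (Cre a + Cre b) (Cim a + Cim b).
Definition Copp (a : Cx) : Cx := mkCx (- Cre a) (- Cim a).
Definition Csub (a b : Cx) : Cx := Cadd a (Copp b).
Definition Cmul (a b : Cx) : Cx :=
  mkCx (Cre a * Cre b - Cim a * Cim b) (Cre a * Cim b + Cim a * Cre b).
Definition Cconj (a : Cx) : Cx := mkCx (Cre a) (- Cim a).

(** Complex Hilbert spaces; the inner product is linear in the first
    argument and conjugate-linear in the second. *)
Record HilbertSpace := {
  hs_car :> Type;
  hs_zero : hs_car;
  hs_add : hs_car -> hs_car -> hs_car;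
  hs_opp : hs_car -> hs_car;
  hs_scal : Cx -> hs_car -> hs_car;
  hs_inner : hs_car -> hs_car -> Cx;
  hs_addA : forall x y z, hs_add x (hs_add y z) = hs_add (hs_add x y) z;
  hs_addC : forall x y, hs_add x y = hs_add y x;
  hs_add0 : forall x, hs_add hs_zero x = x;
  hs_addN : forall x, hs_add x (hs_opp x) = hs_zero;
  hs_scal1 : forall x, hs_scal C1 x = x;
  hs_scalA : forall a b x, hs_scal a (hs_scal b x) = hs_scal (Cmul a b) x;
  hs_scalDl : forall a b x, hs_scal (Cadd a b) x = hs_add (hs_scal a x) (hs_scal b x);
  hs_scalDr : forall a x y, hs_scal a (hs_add x y) = hs_add (hs_scal a x) (hs_scal a y);
  hs_innerDl : forall x y z, hs_inner (hs_add x y) z = Cadd (hs_inner x z) (hs_inner y z);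
  hs_innerZl : forall a x y, hs_inner (hs_scal a x) y = Cmul a (hs_inner x y);
  hs_innerC : forall x y, hs_inner y x = Cconj (hs_inner x y);
  hs_inner_ge0 : forall x, 0 <= Cre (hs_inner x x);
  hs_inner_eq0 : forall x, hs_inner x x = C0 -> x = hs_zero;
  hs_complete : forall u : nat -> hs_car,
    (forall eps, eps > 0 -> exists N, forall n m, (n >= N)%nat -> (m >= N)%nat ->
        sqrt (Cre (hs_inner (hs_add (u n) (hs_opp (u m))) (hs_add (u n) (hs_opp (u m))))) < eps) ->
    exists l, forall eps, eps > 0 -> exists N, forall n, (n >= N)%nat ->
        sqrt (Cre (hs_inner (hs_add (u n) (hs_opp l)) (hs_add (u n) (hs_opp l)))) < eps
}.

Arguments hs_zero {_}.
Arguments hs_add {_}.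
Arguments hs_opp {_}.
Arguments hs_scal {_}.
Arguments hs_inner {_}.

Section Ops.
Variable H : HilbertSpace.
Definition hsub (x y : H) : H := hs_add x (hs_opp y).
Definition hnorm (x : H) : R := sqrt (Cre (hs_inner x x)).
Definition hdist (x y : H) : R := hnorm (hsub x y).
Definition hconv (u : nat -> H) (l : H) : Prop :=
  forall eps, eps > 0 -> exists N, forall n, (n >= N)%nat -> hdist (u n) l < eps.
End Ops.
Arguments hsub {_}.
Arguments hnorm {_}.
Arguments hdist {_}.
Arguments hconv {_}.

Definition lrel (H : HilbertSpace) := H -> H -> Prop.

Definition lrel_linear {H : HilbertSpace} (A : lrel H) : Prop :=
  A hs_zero hs_zero /\
  (forall f f' g g', A f f' -> A g g' -> A (hs_add f g) (hs_add f' g')) /\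
  (forall (a : Cx) f f', A f f' -> A (hs_scal a f) (hs_scal a f')).

Definition lrel_closed {H : HilbertSpace} (A : lrel H) : Prop :=
  forall (u v : nat -> H) f f', (forall n, A (u n) (v n)) ->
    hconv u f -> hconv v f' -> A f f'.

Definition lrel_adj {H : HilbertSpace} (A : lrel H) : lrel H :=
  fun k k' => forall f f', A f f' -> hs_inner f' k = hs_inner f k'.

Definition closed_symmetric_relation {H : HilbertSpace} (A : lrel H) : Prop :=
  lrel_linear A /\ lrel_closed A /\ (forall f f', A f f' -> lrel_adj A f f').

(** ** Boundary mappings: Gamma is a relation between H^2 and K^2,
    represented by its graph  Gamma {f,f'} {h,h'}. *)
Definition brel (H K : HilbertSpace) := (H * H)%type -> (K * K)%type -> Prop.

Definition brel_linear {H K : HilbertSpace} (G : brel H K) : Prop :=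
  G (hs_zero, hs_zero) (hs_zero, hs_zero) /\
  (forall x y x' y', G x y -> G x' y' ->
     G (hs_add (fst x) (fst x'), hs_add (snd x) (snd x'))
       (hs_add (fst y) (fst y'), hs_add (snd y) (snd y'))) /\
  (forall (a : Cx) x y, G x y ->
     G (hs_scal a (fst x), hs_scal a (snd x)) (hs_scal a (fst y), hs_scal a (snd y))).

Definition brel_operator {H K : HilbertSpace} (G : brel H K) : Prop :=
  forall x y1 y2, G x y1 -> G x y2 -> y1 = y2.

Definition brel_Kadj {H K : HilbertSpace} (G : brel H K) : brel K H :=
  fun kk gg => let (k, k') := kk in let (g, g') := gg in
    forall f f' h h', G (f, f') (h, h') ->
      Csub (hs_inner f' g) (hs_inner f g') = Csub (hs_inner h' k) (hs_inner h k').

Definition unitary_boundary_triple {H K : HilbertSpace} (A : lrel H) (G : brel H K) : Prop :=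
  brel_linear G /\ brel_operator G /\
  (forall f f' y, G (f, f') y -> lrel_adj A f f') /\
  (forall f f', lrel_adj A f f' -> forall eps, eps > 0 ->
     exists g g' y, G (g, g') y /\ hdist g f < eps /\ hdist g' f' < eps) /\
  (forall x y, G x y <-> brel_Kadj G y x).

Definition Gamma0_graph {H K : HilbertSpace} (G : brel H K) : (H * H)%type -> K -> Prop :=
  fun x h => exists h', G x (h, h').

Definition closure_HHK {H K : HilbertSpace} (S : (H * H)%type -> K -> Prop)
  : (H * H)%type -> K -> Prop :=
  fun x h => forall eps, eps > 0 -> exists x' h', S x' h' /\
    hdist (fst x') (fst x) < eps /\ hdist (snd x') (snd x) < eps /\ hdist h' h < eps.

Definition is_operator_graph {X Y : Type} (S : X -> Y -> Prop) : Prop :=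
  forall x y1 y2, S x y1 -> S x y2 -> y1 = y2.

Definition closable_Gamma0 {H K : HilbertSpace} (G : brel H K) : Prop :=
  is_operator_graph (closure_HHK (Gamma0_graph G)).

Definition Weyl {H K : HilbertSpace} (G : brel H K) (lam : Cx) : lrel K :=
  fun h k => exists f : H, G (f, hs_scal lam f) (h, k).

Definition weyl_condition {H K : HilbertSpace} (G : brel H K) (lam : Cx) : Prop :=
  forall (h k : nat -> K) (hl : K),
    (forall n, Weyl G lam (h n) (k n)) ->
    hconv h hl ->
    Un_cv (fun n => Cim (hs_inner (k n) (h n))) 0 ->
    hl = hs_zero.

(** Applied
    to a point of [Gamma] itself it gives Green's identity [Im (f', f) = Im (h', h)].  For
    nonreal [lam] this identity yields the a priori bound
    [|Im lam|^2 (|f|^2 + |h|^2) <= 2 (|f' - lam f|^2 + |h' + lam h|^2)], so the pairs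
    [(f' - lam f, - (h' + lam h))] form a closed subspace of [H x K]; unitarity again shows
    that its orthogonal complement is trivial, hence it is everything.  Consequently a
    sequence in [Gamma] with [f_n, f'_n -> 0] can be corrected by a vanishing sequence into
    one with [f'_n = lam f_n], i.e. into points [{h_n, k_n}] of [M(lam)], and for these
    [Im (k_n, h_n) = Im lam |f_n|^2 -> 0]; this turns a violation of closability into a
    violation of the condition on [M(lam)].  Conversely, [Im (k_n, h_n) -> 0] along [M(lam)]
    forces [f_n -> 0], so a violation of that condition violates closability. *)

From Pilot Require Import Defs.
From Stdlib Require Import Reals Lra Psatz Classical ClassicalEpsilon.
Open Scope R_scope.

(* [Lra] and [Reals] export unrelated constants named [C0] and [C1]. *)
Notation C0 := Defs.C0.
Notation C1 := Defs.C1.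

Arguments hs_addA {_}. Arguments hs_addC {_}. Arguments hs_add0 {_}.
Arguments hs_addN {_}. Arguments hs_scal1 {_}. Arguments hs_scalA {_}.
Arguments hs_scalDl {_}. Arguments hs_scalDr {_}. Arguments hs_innerDl {_}.
Arguments hs_innerZl {_}. Arguments hs_innerC {_}. Arguments hs_inner_ge0 {_}.
Arguments hs_inner_eq0 {_}. Arguments hs_complete {_}.

Lemma Cx_ext (a b : Cx) : Cre a = Cre b -> Cim a = Cim b -> a = b.
Proof. destruct a, b; simpl; intros -> ->; reflexivity. Qed.

Ltac cx_ring := apply Cx_ext; unfold Csub, Cadd, Copp, Cmul, Cconj, C0, C1; simpl; ring.

Section HilbertAlgebra.
Context {X : HilbertSpace}.
Implicit Types (x y z u v : X) (a : Cx).

Lemma addr0 x : hs_add x hs_zero = x.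
Proof. rewrite hs_addC; apply hs_add0. Qed.

Lemma addNr x : hs_add (hs_opp x) x = hs_zero.
Proof. rewrite hs_addC; apply hs_addN. Qed.

Lemma addrI u x y : hs_add u x = hs_add u y -> x = y.
Proof.
  intro E. rewrite <- (hs_add0 x), <- (hs_add0 y), <- (addNr u), <- !hs_addA, E.
  reflexivity.
Qed.

Lemma addr_eq0 x y : hs_add x y = hs_zero -> y = hs_opp x.
Proof. intro E. apply (addrI x). rewrite E, hs_addN. reflexivity. Qed.

Lemma opprK x : hs_opp (hs_opp x) = x.
Proof. symmetry. apply addr_eq0, addNr. Qed.

Lemma oppr0 : hs_opp (@hs_zero X) = hs_zero.
Proof. symmetry. apply addr_eq0, addr0. Qed.

Lemma addrACA x y z u :
  hs_add (hs_add x y) (hs_add z u) = hs_add (hs_add x z) (hs_add y u).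
Proof. rewrite <- !hs_addA. f_equal. rewrite !hs_addA. f_equal. apply hs_addC. Qed.

Lemma opprD x y : hs_opp (hs_add x y) = hs_add (hs_opp x) (hs_opp y).
Proof. symmetry. apply addr_eq0. rewrite addrACA, !hs_addN. apply hs_add0. Qed.

Lemma scale0r x : hs_scal C0 x = hs_zero.
Proof.
  apply (addrI (hs_scal C0 x)). rewrite addr0, <- hs_scalDl. f_equal. cx_ring.
Qed.

Lemma scaler0 a : hs_scal a (@hs_zero X) = hs_zero.
Proof.
  apply (addrI (hs_scal a hs_zero)). rewrite addr0, <- hs_scalDr, hs_add0. reflexivity.
Qed.

Lemma scaleN1r x : hs_scal (Copp C1) x = hs_opp x.
Proof.
  apply addr_eq0. rewrite <- (hs_scal1 x) at 1. rewrite <- hs_scalDl.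
  replace (Cadd C1 (Copp C1)) with C0 by cx_ring. apply scale0r.
Qed.

Lemma scalerN a x : hs_scal a (hs_opp x) = hs_opp (hs_scal a x).
Proof. apply addr_eq0. rewrite <- hs_scalDr, hs_addN. apply scaler0. Qed.

Lemma scalerB a x y : hs_scal a (hsub x y) = hsub (hs_scal a x) (hs_scal a y).
Proof. unfold hsub. rewrite hs_scalDr, scalerN. reflexivity. Qed.

Lemma subrr x : hsub x x = hs_zero.
Proof. apply hs_addN. Qed.

Lemma subr0 x : hsub x hs_zero = x.
Proof. unfold hsub. rewrite oppr0. apply addr0. Qed.

Lemma subr0_eq x y : hsub x y = hs_zero -> x = y.
Proof. intro E. rewrite <- (opprK y). apply addr_eq0. rewrite hs_addC. exact E. Qed.

Lemma subrK x y : hs_add (hsub x y) y = x.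
Proof. unfold hsub. rewrite <- hs_addA, addNr. apply addr0. Qed.

Lemma subKr x y : hsub x (hsub x y) = y.
Proof. unfold hsub. rewrite opprD, opprK, hs_addA, hs_addN. apply hs_add0. Qed.

Lemma subrDr x y z : hsub x (hs_add y z) = hsub (hsub x y) z.
Proof. unfold hsub. rewrite opprD, hs_addA. reflexivity. Qed.

Lemma subrACA x y z u : hsub (hs_add x y) (hs_add z u) = hs_add (hsub x z) (hsub y u).
Proof. unfold hsub. rewrite opprD. apply addrACA. Qed.

Lemma subrBB x y z u : hsub (hsub x y) (hsub z u) = hsub (hsub x z) (hsub y u).
Proof. unfold hsub. rewrite !opprD, !opprK. apply addrACA. Qed.

Lemma opprB x y : hsub (hs_opp x) (hs_opp y) = hs_opp (hsub x y).
Proof. unfold hsub. rewrite opprD. reflexivity. Qed.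

Lemma addrr x : hs_add x x = hs_scal (mkCx 2 0) x.
Proof.
  replace (mkCx 2 0) with (Cadd C1 C1) by cx_ring. rewrite hs_scalDl, hs_scal1. reflexivity.
Qed.

Lemma inner_addr x y z : hs_inner x (hs_add y z) = Cadd (hs_inner x y) (hs_inner x z).
Proof. rewrite hs_innerC, hs_innerDl, (hs_innerC y x), (hs_innerC z x). cx_ring. Qed.

Lemma inner_scalr a x y : hs_inner x (hs_scal a y) = Cmul (Cconj a) (hs_inner x y).
Proof. rewrite hs_innerC, hs_innerZl, (hs_innerC y x). cx_ring. Qed.

Lemma inner0l x : hs_inner hs_zero x = C0.
Proof. rewrite <- (scale0r x), hs_innerZl. cx_ring. Qed.

Lemma inner0r x : hs_inner x hs_zero = C0.
Proof. rewrite hs_innerC, inner0l. cx_ring. Qed.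

Lemma inner_oppl x y : hs_inner (hs_opp x) y = Copp (hs_inner x y).
Proof. rewrite <- scaleN1r, hs_innerZl. cx_ring. Qed.

Lemma inner_oppr x y : hs_inner y (hs_opp x) = Copp (hs_inner y x).
Proof. rewrite <- scaleN1r, inner_scalr. cx_ring. Qed.

Lemma inner_subl x y z : hs_inner (hsub x y) z = Csub (hs_inner x z) (hs_inner y z).
Proof. unfold hsub. rewrite hs_innerDl, inner_oppl. reflexivity. Qed.

Lemma inner_subr x y z : hs_inner z (hsub x y) = Csub (hs_inner z x) (hs_inner z y).
Proof. unfold hsub. rewrite inner_addr, inner_oppr. reflexivity. Qed.

Lemma re_innerC x y : Cre (hs_inner y x) = Cre (hs_inner x y).
Proof. rewrite hs_innerC. reflexivity. Qed.

Lemma im_innerC x y : Cim (hs_inner y x) = - Cim (hs_inner x y).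
Proof. rewrite hs_innerC. reflexivity. Qed.

Lemma im_inner_self x : Cim (hs_inner x x) = 0.
Proof. pose proof (im_innerC x x). lra. Qed.

(* All estimates use the squared norm, which avoids square roots. *)
Definition ns x : R := Cre (hs_inner x x).

Lemma ns_ge0 x : 0 <= ns x.
Proof. apply hs_inner_ge0. Qed.

Lemma ns_eq0 x : ns x = 0 -> x = hs_zero.
Proof. intro E. apply hs_inner_eq0, Cx_ext; [exact E | apply im_inner_self]. Qed.

Lemma ns0 : ns (@hs_zero X) = 0.
Proof. unfold ns. rewrite inner0l. reflexivity. Qed.

Lemma ns_add x y : ns (hs_add x y) = ns x + ns y + 2 * Cre (hs_inner x y).
Proof. unfold ns. rewrite hs_innerDl, !inner_addr. simpl. rewrite (re_innerC x y). ring. Qed.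

Lemma ns_sub x y : ns (hsub x y) = ns x + ns y - 2 * Cre (hs_inner x y).
Proof. unfold ns. rewrite inner_subl, !inner_subr. simpl. rewrite (re_innerC x y). ring. Qed.

Lemma ns_scal a x : ns (hs_scal a x) = (Cre a * Cre a + Cim a * Cim a) * ns x.
Proof. unfold ns. rewrite hs_innerZl, inner_scalr. simpl. rewrite im_inner_self. ring. Qed.

Lemma ns_opp x : ns (hs_opp x) = ns x.
Proof. unfold ns. rewrite inner_oppl, inner_oppr. simpl. ring. Qed.

Lemma ns_add_le x y : ns (hs_add x y) <= 2 * ns x + 2 * ns y.
Proof. pose proof (ns_add x y). pose proof (ns_sub x y). pose proof (ns_ge0 (hsub x y)). lra. Qed.

Lemma ns_sub_le x y : ns (hsub x y) <= 2 * ns x + 2 * ns y.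
Proof. unfold hsub. rewrite <- (ns_opp y). apply ns_add_le. Qed.

Lemma im_scal_inner a x : Cim (hs_inner (hs_scal a x) x) = Cim a * ns x.
Proof. rewrite hs_innerZl. simpl. rewrite im_inner_self. unfold ns. ring. Qed.

Lemma cauchy_schwarz_re x y : Cre (hs_inner x y) * Cre (hs_inner x y) <= ns x * ns y.
Proof.
  set (r := Cre (hs_inner x y)).
  destruct (Req_dec (ns y) 0) as [E | E].
  - apply ns_eq0 in E. subst y. unfold r. rewrite inner0r, ns0. simpl. lra.
  - pose proof (ns_ge0 y). assert (Hy : 0 < ns y) by lra.
    pose proof (ns_ge0 (hs_add x (hs_scal (mkCx (- r / ns y) 0) y))) as P.
    rewrite ns_add, ns_scal, inner_scalr in P. simpl in P. fold r in P.
    replace (ns x + ((- r / ns y) * (- r / ns y) + 0 * 0) * ns y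
             + 2 * (- r / ns y * r - - 0 * Cim (hs_inner x y)))
      with (ns x - r * r / ns y) in P by (field; lra).
    apply Rmult_le_reg_r with (/ ns y); [apply Rinv_0_lt_compat; lra|].
    replace (ns x * ns y * / ns y) with (ns x) by (field; lra). unfold Rdiv in P. lra.
Qed.

Lemma cauchy_schwarz_im x y : Cim (hs_inner x y) * Cim (hs_inner x y) <= ns x * ns y.
Proof.
  pose proof (cauchy_schwarz_re x (hs_scal (mkCx 0 1) y)) as P.
  rewrite inner_scalr, ns_scal in P. simpl in P. nra.
Qed.

End HilbertAlgebra.

Lemma inv_succ_lt eps : eps > 0 -> exists N, forall n, (n >= N)%nat -> / (INR n + 1) < eps.
Proof.
  intro He. destruct (archimed_cor1 eps He) as [N [HN HN0]]. exists N. intros n Hn.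
  apply le_INR in Hn. assert (0 < INR N) by (apply lt_0_INR; lia).
  eapply Rle_lt_trans; [|exact HN]. apply Rinv_le_contravar; lra.
Qed.

Lemma cv_inv_succ : Un_cv (fun n => / (INR n + 1)) 0.
Proof.
  intros eps He. destruct (inv_succ_lt eps He) as [N HN]. exists N. intros n Hn.
  unfold R_dist. rewrite Rminus_0_r. pose proof (pos_INR n).
  rewrite Rabs_right; [auto | apply Rle_ge, Rlt_le, Rinv_0_lt_compat; lra].
Qed.

Lemma cv_cst (c : R) : Un_cv (fun _ => c) c.
Proof. intros eps He. exists 0%nat. intros. unfold R_dist. rewrite Rminus_diag, Rabs_R0. lra. Qed.

Lemma sqrt_lt_sq (a e : R) : 0 <= a -> 0 < e -> (sqrt a < e <-> a < e * e).
Proof.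
  intros Ha He. split; intro H.
  - pose proof (sqrt_sqrt a Ha). pose proof (sqrt_pos a). nra.
  - rewrite <- (sqrt_square e) by lra. apply sqrt_lt_1_alt. lra.
Qed.

Section Convergence.
Context {X : HilbertSpace}.
Implicit Types (u v : nat -> X) (x l m : X).

Definition cv u l : Prop :=
  forall eps, eps > 0 -> exists N, forall n, (n >= N)%nat -> ns (hsub (u n) l) < eps.

Definition cauchy u : Prop :=
  forall eps, eps > 0 -> exists N, forall n k, (n >= N)%nat -> (k >= N)%nat ->
    ns (hsub (u n) (u k)) < eps.

Lemma hdist_lt x y eps : 0 < eps -> hdist x y < eps <-> ns (hsub x y) < eps * eps.
Proof. intro He. apply sqrt_lt_sq; [apply ns_ge0 | exact He]. Qed.

Lemma hconv_cv u l : hconv u l <-> cv u l.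
Proof.
  split; intros Hu eps He.
  - destruct (Hu (sqrt eps)) as [N HN]; [apply sqrt_lt_R0; lra|].
    exists N. intros n Hn. specialize (HN n Hn).
    apply hdist_lt in HN; [|apply sqrt_lt_R0; lra]. rewrite sqrt_sqrt in HN by lra. exact HN.
  - destruct (Hu (eps * eps)) as [N HN]; [nra|].
    exists N. intros n Hn. apply hdist_lt; auto.
Qed.

Lemma cv_const l : cv (fun _ => l) l.
Proof. intros eps He. exists 0%nat. intros. rewrite subrr, ns0. lra. Qed.

Lemma cv_add u v l m : cv u l -> cv v m -> cv (fun n => hs_add (u n) (v n)) (hs_add l m).
Proof.
  intros Hu Hv eps He.
  destruct (Hu (eps/4)) as [N1 H1]; [lra|]. destruct (Hv (eps/4)) as [N2 H2]; [lra|].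
  exists (max N1 N2). intros n Hn. rewrite subrACA.
  eapply Rle_lt_trans; [apply ns_add_le|].
  assert (ns (hsub (u n) l) < eps/4) by (apply H1; lia).
  assert (ns (hsub (v n) m) < eps/4) by (apply H2; lia). lra.
Qed.

Lemma cv_opp u l : cv u l -> cv (fun n => hs_opp (u n)) (hs_opp l).
Proof.
  intros Hu eps He. destruct (Hu eps He) as [N HN]. exists N. intros n Hn.
  rewrite opprB, ns_opp. auto.
Qed.

Lemma cv_sub u v l m : cv u l -> cv v m -> cv (fun n => hsub (u n) (v n)) (hsub l m).
Proof. intros Hu Hv. exact (cv_add _ _ _ _ Hu (cv_opp _ _ Hv)). Qed.

Lemma cv_scal a u l : cv u l -> cv (fun n => hs_scal a (u n)) (hs_scal a l).
Proof.
  intros Hu eps He. set (c := Cre a * Cre a + Cim a * Cim a).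
  assert (0 <= c) by (unfold c; nra).
  destruct (Hu (eps / (c + 1))) as [N HN]; [apply Rdiv_lt_0_compat; lra|].
  exists N. intros n Hn. rewrite <- scalerB, ns_scal. fold c.
  specialize (HN n Hn). pose proof (ns_ge0 (hsub (u n) l)).
  apply Rle_lt_trans with ((c + 1) * ns (hsub (u n) l)); [nra|].
  apply Rmult_lt_reg_r with (/ (c + 1)); [apply Rinv_0_lt_compat; lra|].
  replace ((c + 1) * ns (hsub (u n) l) * / (c + 1)) with (ns (hsub (u n) l)) by (field; lra).
  exact HN.
Qed.

Lemma cv_sub_zero u l : cv u l <-> cv (fun n => hsub (u n) l) hs_zero.
Proof. unfold cv. setoid_rewrite subr0. reflexivity. Qed.

Lemma cv0_ns u : cv u hs_zero <-> Un_cv (fun n => ns (u n)) 0.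
Proof.
  unfold cv, Un_cv, R_dist. setoid_rewrite subr0. setoid_rewrite Rminus_0_r.
  split; intros Hu eps He; destruct (Hu eps He) as [N HN]; exists N; intros n Hn;
    specialize (HN n Hn); pose proof (ns_ge0 (u n));
    [rewrite Rabs_right | rewrite Rabs_right in HN]; auto; lra.
Qed.

Lemma cv_cauchy u l : cv u l -> cauchy u.
Proof.
  intros Hu eps He. destruct (Hu (eps/4)) as [N HN]; [lra|]. exists N. intros n k Hn Hk.
  replace (hsub (u n) (u k)) with (hsub (hsub (u n) l) (hsub (u k) l))
    by (rewrite subrBB, subrr; apply subr0).
  eapply Rle_lt_trans; [apply ns_sub_le|].
  specialize (HN n Hn) as Hn'. specialize (HN k Hk). lra.
Qed.

Lemma cauchy_cv u : cauchy u -> exists l, cv u l.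
Proof.
  intro Hu. destruct (hs_complete u) as [l Hl].
  - intros eps He. destruct (Hu (eps * eps)) as [N HN]; [nra|]. exists N. intros n k Hn Hk.
    apply (hdist_lt (u n) (u k)); auto.
  - exists l. apply hconv_cv. exact Hl.
Qed.

Lemma inner_small_r x eps : eps > 0 -> exists d, d > 0 /\ forall y, ns y < d ->
  Rabs (Cre (hs_inner x y)) < eps /\ Rabs (Cim (hs_inner x y)) < eps.
Proof.
  intro He. pose proof (ns_ge0 x). exists (eps * eps / (ns x + 1)). split.
  - apply Rdiv_lt_0_compat; nra.
  - intros y Hy. pose proof (ns_ge0 y).
    assert (ns y * (ns x + 1) < eps * eps).
    { apply Rmult_lt_reg_r with (/ (ns x + 1)); [apply Rinv_0_lt_compat; lra|].
      replace (ns y * (ns x + 1) * / (ns x + 1)) with (ns y) by (field; lra). exact Hy. }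
    pose proof (cauchy_schwarz_re x y). pose proof (cauchy_schwarz_im x y).
    split; apply Rabs_def1; nra.
Qed.

Lemma cv_inner_r x u l : cv u l ->
  Un_cv (fun n => Cre (hs_inner x (u n))) (Cre (hs_inner x l)) /\
  Un_cv (fun n => Cim (hs_inner x (u n))) (Cim (hs_inner x l)).
Proof.
  intro Hu. split; intros eps He; destruct (inner_small_r x eps He) as [d [Hd Hs]];
  destruct (Hu d Hd) as [N HN]; exists N; intros n Hn; unfold R_dist;
  specialize (Hs _ (HN n Hn)); rewrite inner_subr in Hs; simpl in Hs; tauto.
Qed.

Lemma cv_ns u l : cv u l -> Un_cv (fun n => ns (u n)) (ns l).
Proof.
  intro Hu. apply cv_sub_zero in Hu as Hd.
  assert (Ed : forall n, ns (u n) = ns l + ns (hsub (u n) l) + 2 * Cre (hs_inner l (hsub (u n) l))).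
  { intro n. rewrite <- ns_add, hs_addC. f_equal. symmetry. apply subrK. }
  pose proof (proj1 (cv0_ns _) Hd) as Cd.
  destruct (cv_inner_r l _ _ Hd) as [Ci _]. rewrite inner0r in Ci. simpl in Ci.
  assert (L : Un_cv (fun n => ns l + ns (hsub (u n) l) + 2 * Cre (hs_inner l (hsub (u n) l)))
                   (ns l + 0 + 2 * 0)).
  { apply CV_plus; [apply CV_plus | apply CV_mult]; auto; apply cv_cst. }
  rewrite Rplus_0_r, Rmult_0_r, Rplus_0_r in L.
  eapply Un_cv_ext; [intro n; symmetry; apply Ed | exact L].
Qed.

End Convergence.

Lemma lt_of_mul_le (c a b eps : R) : 0 < c -> c * a <= b -> b < c * eps -> a < eps.
Proof. intros Hc Hab Hb. apply Rmult_lt_reg_l with c; lra. Qed.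

Section NormComparison.
Context {X Y : HilbertSpace}.
Variable c : R.
Hypothesis c_gt0 : 0 < c.

Lemma cv0_of_ns_le (w : nat -> X) (p : nat -> Y) :
  (forall n, c * ns (w n) <= ns (p n)) -> cv p hs_zero -> cv w hs_zero.
Proof.
  intros Hle Hp eps He. destruct (Hp (c * eps)) as [N HN]; [nra|].
  exists N. intros n Hn. specialize (HN n Hn). rewrite subr0 in HN. rewrite subr0.
  exact (lt_of_mul_le _ _ _ _ c_gt0 (Hle n) HN).
Qed.

Lemma cauchy_of_ns_le (w : nat -> X) (p : nat -> Y) :
  (forall n k, c * ns (hsub (w n) (w k)) <= ns (hsub (p n) (p k))) -> cauchy p -> cauchy w.
Proof.
  intros Hle Hp eps He. destruct (Hp (c * eps)) as [N HN]; [nra|].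
  exists N. intros n k Hn Hk. exact (lt_of_mul_le _ _ _ _ c_gt0 (Hle n k) (HN n k Hn Hk)).
Qed.

End NormComparison.

Section Projection.
Context {X : HilbertSpace}.
Implicit Types (S : X -> Prop) (x y z s t : X).

Definition subspace S : Prop :=
  S hs_zero /\ (forall x y, S x -> S y -> S (hs_add x y)) /\
  (forall a x, S x -> S (hs_scal a x)).

Definition seq_closed S : Prop :=
  forall (u : nat -> X) l, (forall n, S (u n)) -> cv u l -> S l.

Lemma parallelogram x y : ns (hs_add x y) + ns (hsub x y) = 2 * ns x + 2 * ns y.
Proof. rewrite ns_add, ns_sub. ring. Qed.

Lemma ns_sub_midpoint x y z :
  ns (hsub y z) = 2 * ns (hsub x y) + 2 * ns (hsub x z)
                  - 4 * ns (hsub x (hs_scal (mkCx (/2) 0) (hs_add y z))).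
Proof.
  assert (Hsum : hs_add (hsub x y) (hsub x z)
                 = hs_scal (mkCx 2 0) (hsub x (hs_scal (mkCx (/2) 0) (hs_add y z)))).
  { rewrite <- subrACA, scalerB, addrr, hs_scalA.
    replace (Cmul (mkCx 2 0) (mkCx (/2) 0)) with C1 by (apply Cx_ext; simpl; field).
    rewrite hs_scal1. reflexivity. }
  assert (Hdiff : ns (hsub (hsub x y) (hsub x z)) = ns (hsub y z)).
  { rewrite subrBB, subrr. unfold hsub at 1. rewrite hs_add0, ns_opp. reflexivity. }
  pose proof (parallelogram (hsub x y) (hsub x z)) as P.
  rewrite Hsum, Hdiff, ns_scal in P. simpl in P. lra.
Qed.

Lemma nearest_point_orthogonal z t :
  (forall c, ns z <= ns (hsub z (hs_scal c t))) -> hs_inner t z = C0.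
Proof.
  intro Hmin. set (vr := Cre (hs_inner t z)). set (vi := Cim (hs_inner t z)).
  set (eps := / (ns t + 1)). pose proof (ns_ge0 t).
  assert (Heps : 0 < eps) by (apply Rinv_0_lt_compat; lra).
  assert (Hepst : eps * ns t < 1).
  { unfold eps. apply Rmult_lt_reg_l with (ns t + 1); [lra|].
    replace ((ns t + 1) * (/ (ns t + 1) * ns t)) with (ns t) by (field; lra). lra. }
  (* unless [(t, z) = 0], subtracting a small multiple of [conj (t, z) t] shortens [z] *)
  specialize (Hmin (mkCx (eps * vr) (- (eps * vi)))).
  rewrite ns_sub, ns_scal, inner_scalr, (hs_innerC t z) in Hmin. simpl in Hmin. fold vr vi in Hmin.
  set (q := vr * vr + vi * vi).
  assert (Hq : 0 <= eps * q * (eps * ns t - 2)).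
  { replace (eps * q * (eps * ns t - 2)) with
      ((eps * vr * (eps * vr) + - (eps * vi) * - (eps * vi)) * ns t
       - 2 * (eps * vr * vr - - - (eps * vi) * - vi)) by (unfold q; ring). lra. }
  assert (q <= 0).
  { assert (0 <= q) by (unfold q; nra).
    apply Rmult_le_reg_l with eps; [exact Heps|]. nra. }
  apply Cx_ext; simpl; fold vr vi; unfold q in *; nra.
Qed.

Lemma exists_nearest_point S : subspace S -> seq_closed S ->
  forall x, exists s, S s /\ forall t, S t -> ns (hsub x s) <= ns (hsub x t).
Proof.
  intros [S0 [SD SZ]] Scl x.
  (* [- m] below is the infimum of [ns (hsub x s)] over [S] *)
  set (E := fun r => exists s, S s /\ r = - ns (hsub x s)).
  destruct (completeness E) as [m [Hub Hlub]].
  { exists 0. intros r [s [_ ->]]. pose proof (ns_ge0 (hsub x s)). lra. }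
  { exists (- ns (hsub x hs_zero)), hs_zero. auto. }
  assert (Hinf : forall t, S t -> - m <= ns (hsub x t)).
  { intros t St. assert (E (- ns (hsub x t))) by (exists t; auto). specialize (Hub _ H). lra. }
  assert (Happrox : forall eps, eps > 0 -> exists s, S s /\ ns (hsub x s) < - m + eps).
  { intros eps He. apply NNPP. intro Hn.
    assert (is_upper_bound E (m - eps)).
    { intros r [s [Hs ->]]. apply Rnot_lt_le. intro Hlt. apply Hn. exists s. split; auto. lra. }
    specialize (Hlub _ H). lra. }
  destruct (choice (fun n s => S s /\ ns (hsub x s) < - m + / (INR n + 1))) as [u Hu].
  { intro n. apply Happrox, Rinv_0_lt_compat. pose proof (pos_INR n). lra. }
  assert (Cu : cauchy u).
  { intros eps He. destruct (inv_succ_lt (eps/4)) as [N HN]; [lra|]. exists N. intros n k Hn Hk.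
    destruct (Hu n) as [Sn Dn]. destruct (Hu k) as [Sk Dk].
    specialize (Hinf _ (SZ (mkCx (/2) 0) _ (SD _ _ Sn Sk))).
    rewrite (ns_sub_midpoint x). specialize (HN n Hn) as HNn. specialize (HN k Hk). lra. }
  destruct (cauchy_cv u Cu) as [s Hs].
  assert (Ss : S s) by (apply (Scl u); [intro n; apply Hu | exact Hs]).
  exists s. split; auto. intros t St. apply Rle_trans with (- m); [|apply Hinf; auto].
  apply (Rle_cv_lim (Un := fun n => ns (hsub x (u n))) (Vn := fun n => - m + / (INR n + 1))).
  - intro n. left. apply Hu.
  - apply cv_ns, cv_sub; [apply cv_const | exact Hs].
  - pose proof (CV_plus _ _ _ _ (cv_cst (- m)) cv_inv_succ) as L.
    rewrite Rplus_0_r in L. exact L.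
Qed.

Theorem closed_subspace_total S : subspace S -> seq_closed S ->
  (forall z, (forall s, S s -> hs_inner s z = C0) -> z = hs_zero) -> forall x, S x.
Proof.
  intros HS Scl Horth x.
  destruct (exists_nearest_point S HS Scl x) as [s [Ss Hs]].
  destruct HS as [_ [SD SZ]].
  assert (Hz : hsub x s = hs_zero).
  { apply Horth. intros t St. apply nearest_point_orthogonal. intro c.
    rewrite <- subrDr. apply Hs, SD, SZ; auto. }
  apply subr0_eq in Hz. subst. exact Ss.
Qed.

End Projection.

Section ProductSpace.
Context {H K : HilbertSpace}.
Implicit Types (p q r : H * K).

Definition padd p q : H * K := (hs_add (fst p) (fst q), hs_add (snd p) (snd q)).
Definition popp p : H * K := (hs_opp (fst p), hs_opp (snd p)).
Definition pscal a p : H * K := (hs_scal a (fst p), hs_scal a (snd p)).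
Definition pinner p q : Cx := Cadd (hs_inner (fst p) (fst q)) (hs_inner (snd p) (snd q)).
Definition pzero : H * K := (hs_zero, hs_zero).

Lemma padd_A p q r : padd p (padd q r) = padd (padd p q) r.
Proof. unfold padd; simpl; rewrite !hs_addA; reflexivity. Qed.
Lemma padd_C p q : padd p q = padd q p.
Proof. unfold padd; rewrite (hs_addC (fst p)), (hs_addC (snd p)); reflexivity. Qed.
Lemma padd_0 p : padd pzero p = p.
Proof. destruct p; unfold padd; simpl; rewrite !hs_add0; reflexivity. Qed.
Lemma padd_N p : padd p (popp p) = pzero.
Proof. unfold padd; simpl; rewrite !hs_addN; reflexivity. Qed.
Lemma pscal_1 p : pscal C1 p = p.
Proof. destruct p; unfold pscal; simpl; rewrite !hs_scal1; reflexivity. Qed.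
Lemma pscal_A a b p : pscal a (pscal b p) = pscal (Cmul a b) p.
Proof. unfold pscal; simpl; rewrite !hs_scalA; reflexivity. Qed.
Lemma pscal_Dl a b p : pscal (Cadd a b) p = padd (pscal a p) (pscal b p).
Proof. unfold pscal, padd; simpl; rewrite !hs_scalDl; reflexivity. Qed.
Lemma pscal_Dr a p q : pscal a (padd p q) = padd (pscal a p) (pscal a q).
Proof. unfold pscal, padd; simpl; rewrite !hs_scalDr; reflexivity. Qed.
Lemma pinner_Dl p q r : pinner (padd p q) r = Cadd (pinner p r) (pinner q r).
Proof. unfold pinner, padd; simpl; rewrite !hs_innerDl. cx_ring. Qed.
Lemma pinner_Zl a p q : pinner (pscal a p) q = Cmul a (pinner p q).
Proof. unfold pinner, pscal; simpl; rewrite !hs_innerZl. cx_ring. Qed.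
Lemma pinner_C p q : pinner q p = Cconj (pinner p q).
Proof. unfold pinner; rewrite (hs_innerC (fst p)), (hs_innerC (snd p)). cx_ring. Qed.
Lemma pinner_ge0 p : 0 <= Cre (pinner p p).
Proof. pose proof (ns_ge0 (fst p)). pose proof (ns_ge0 (snd p)). unfold ns in *. simpl. lra. Qed.
Lemma pinner_eq0 p : pinner p p = C0 -> p = pzero.
Proof.
  intro E. apply (f_equal Cre) in E. simpl in E. fold (ns (fst p)) (ns (snd p)) in E.
  pose proof (ns_ge0 (fst p)). pose proof (ns_ge0 (snd p)).
  destruct p as [a b]. unfold pzero. simpl in *. f_equal; apply ns_eq0; lra.
Qed.

Lemma pinner_complete (u : nat -> H * K) :
  (forall eps, eps > 0 -> exists N, forall n m, (n >= N)%nat -> (m >= N)%nat ->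
     sqrt (Cre (pinner (padd (u n) (popp (u m))) (padd (u n) (popp (u m))))) < eps) ->
  exists l, forall eps, eps > 0 -> exists N, forall n, (n >= N)%nat ->
     sqrt (Cre (pinner (padd (u n) (popp l)) (padd (u n) (popp l)))) < eps.
Proof.
  intro Hc.
  assert (Hsum : forall eps, eps > 0 -> exists N, forall n m, (n >= N)%nat -> (m >= N)%nat ->
     ns (hsub (fst (u n)) (fst (u m))) + ns (hsub (snd (u n)) (snd (u m))) < eps).
  { intros eps He. destruct (Hc (sqrt eps)) as [N HN]; [apply sqrt_lt_R0; lra|].
    exists N. intros n m Hn Hm. specialize (HN n m Hn Hm).
    apply sqrt_lt_sq in HN; [|apply pinner_ge0 | apply sqrt_lt_R0; lra].
    rewrite sqrt_sqrt in HN by lra. exact HN. }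
  destruct (cauchy_cv (fun n => fst (u n))) as [l1 H1].
  { intros eps He. destruct (Hsum eps He) as [N HN]. exists N. intros n m Hn Hm.
    specialize (HN n m Hn Hm). pose proof (ns_ge0 (hsub (snd (u n)) (snd (u m)))). lra. }
  destruct (cauchy_cv (fun n => snd (u n))) as [l2 H2].
  { intros eps He. destruct (Hsum eps He) as [N HN]. exists N. intros n m Hn Hm.
    specialize (HN n m Hn Hm). pose proof (ns_ge0 (hsub (fst (u n)) (fst (u m)))). lra. }
  exists (l1, l2). intros eps He.
  destruct (H1 (eps * eps / 2)) as [N1 HN1]; [nra|].
  destruct (H2 (eps * eps / 2)) as [N2 HN2]; [nra|].
  exists (max N1 N2). intros n Hn. apply sqrt_lt_sq; [apply pinner_ge0 | lra|].
  specialize (HN1 n ltac:(lia)). specialize (HN2 n ltac:(lia)). simpl. unfold ns, hsub in *. lra.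
Qed.

Definition prod_space : HilbertSpace :=
  {| hs_car := (H * K)%type; hs_zero := pzero; hs_add := padd; hs_opp := popp;
     hs_scal := pscal; hs_inner := pinner;
     hs_addA := padd_A; hs_addC := padd_C; hs_add0 := padd_0; hs_addN := padd_N;
     hs_scal1 := pscal_1; hs_scalA := pscal_A; hs_scalDl := pscal_Dl; hs_scalDr := pscal_Dr;
     hs_innerDl := pinner_Dl; hs_innerZl := pinner_Zl; hs_innerC := pinner_C;
     hs_inner_ge0 := pinner_ge0; hs_inner_eq0 := pinner_eq0; hs_complete := pinner_complete |}.

Lemma cv_prod (u : nat -> prod_space) l :
  cv u l -> cv (fun n => fst (u n)) (fst l) /\ cv (fun n => snd (u n)) (snd l).
Proof.
  intro Hu. split; intros eps He; destruct (Hu eps He) as [N HN]; exists N; intros n Hn;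
    specialize (HN n Hn); unfold ns in HN; simpl in HN;
    pose proof (ns_ge0 (hsub (fst (u n)) (fst l))); pose proof (ns_ge0 (hsub (snd (u n)) (snd l)));
    unfold ns, hsub in *; lra.
Qed.

Lemma cv_pair (u : nat -> H) (v : nat -> K) l m :
  cv u l -> cv v m -> @cv prod_space (fun n => (u n, v n)) (l, m).
Proof.
  intros Hu Hv eps He. destruct (Hu (eps / 2)) as [N1 HN1]; [lra|].
  destruct (Hv (eps / 2)) as [N2 HN2]; [lra|]. exists (max N1 N2). intros n Hn.
  change (ns (hsub (u n) l) + ns (hsub (v n) m) < eps).
  specialize (HN1 n ltac:(lia)). specialize (HN2 n ltac:(lia)). lra.
Qed.

End ProductSpace.

Arguments prod_space : clear implicits.

Lemma cv_inner_identity {H K : HilbertSpace} (a b : H) (c d : K)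
    (u v : nat -> H) (w z : nat -> K) u0 v0 w0 z0 :
  (forall n, Csub (hs_inner a (u n)) (hs_inner b (v n))
             = Csub (hs_inner c (w n)) (hs_inner d (z n))) ->
  cv u u0 -> cv v v0 -> cv w w0 -> cv z z0 ->
  Csub (hs_inner a u0) (hs_inner b v0) = Csub (hs_inner c w0) (hs_inner d z0).
Proof.
  intros E Cu Cv Cw Cz.
  destruct (cv_inner_r a _ _ Cu) as [Ru Iu]. destruct (cv_inner_r b _ _ Cv) as [Rv Iv].
  destruct (cv_inner_r c _ _ Cw) as [Rw Iw]. destruct (cv_inner_r d _ _ Cz) as [Rz Iz].
  apply Cx_ext; simpl.
  - apply (UL_sequence (fun n => Cre (hs_inner a (u n)) + - Cre (hs_inner b (v n)))).
    + apply CV_plus; [exact Ru | apply CV_opp; exact Rv].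
    + eapply Un_cv_ext; [intro n; symmetry; apply (f_equal Cre (E n)) |].
      apply CV_plus; [exact Rw | apply CV_opp; exact Rz].
  - apply (UL_sequence (fun n => Cim (hs_inner a (u n)) + - Cim (hs_inner b (v n)))).
    + apply CV_plus; [exact Iu | apply CV_opp; exact Iv].
    + eapply Un_cv_ext; [intro n; symmetry; apply (f_equal Cim (E n)) |].
      apply CV_plus; [exact Iw | apply CV_opp; exact Iz].
Qed.

Lemma closure_HHK_cv {H K : HilbertSpace} (S : (H * H)%type -> K -> Prop) x y :
  closure_HHK S x y <->
  exists (u : nat -> H * H) (w : nat -> K), (forall n, S (u n) (w n)) /\
    cv (fun n => fst (u n)) (fst x) /\ cv (fun n => snd (u n)) (snd x) /\ cv w y.
Proof.
  split.
  - intro Cl.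
    destruct (choice (fun n (p : (H * H) * K) => S (fst p) (snd p) /\
        hdist (fst (fst p)) (fst x) < / (INR n + 1) /\
        hdist (snd (fst p)) (snd x) < / (INR n + 1) /\
        hdist (snd p) y < / (INR n + 1))) as [s Hs].
    { intro n. destruct (Cl (/ (INR n + 1))) as [x' [y' Hx']].
      { apply Rinv_0_lt_compat. pose proof (pos_INR n). lra. }
      exists (x', y'). exact Hx'. }
    exists (fun n => fst (s n)), (fun n => snd (s n)). split; [intro n; apply Hs|].
    split; [|split]; apply hconv_cv; intros eps He; destruct (inv_succ_lt eps He) as [N HN];
      exists N; intros n Hn; specialize (HN n Hn); destruct (Hs n) as (_ & D1 & D2 & D3); lra.
  - intros (u & w & Su & C1 & C2 & C3) eps He.
    destruct (C1 (eps * eps)) as [N1 HN1]; [nra|]. destruct (C2 (eps * eps)) as [N2 HN2]; [nra|].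
    destruct (C3 (eps * eps)) as [N3 HN3]; [nra|].
    set (n := max N1 (max N2 N3)). exists (u n), (w n).
    split; [apply Su|]. rewrite !hdist_lt by exact He.
    split; [|split]; [apply HN1 | apply HN2 | apply HN3]; unfold n; lia.
Qed.

Section UnitaryRelation.
Context {H K : HilbertSpace} (G : brel H K).
Hypothesis G_linear : brel_linear G.
Hypothesis G_unitary : forall x y, G x y <-> brel_Kadj G y x.

Lemma G_zero : G (hs_zero, hs_zero) (hs_zero, hs_zero).
Proof. apply G_linear. Qed.

Lemma G_add f1 f1' h1 h1' f2 f2' h2 h2' :
  G (f1, f1') (h1, h1') -> G (f2, f2') (h2, h2') ->
  G (hs_add f1 f2, hs_add f1' f2') (hs_add h1 h2, hs_add h1' h2').
Proof. apply G_linear. Qed.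

Lemma G_scal c f f' h h' :
  G (f, f') (h, h') -> G (hs_scal c f, hs_scal c f') (hs_scal c h, hs_scal c h').
Proof. apply G_linear. Qed.

Lemma G_sub f1 f1' h1 h1' f2 f2' h2 h2' :
  G (f1, f1') (h1, h1') -> G (f2, f2') (h2, h2') ->
  G (hsub f1 f2, hsub f1' f2') (hsub h1 h2, hsub h1' h2').
Proof.
  intros E1 E2. pose proof (G_scal (Copp C1) _ _ _ _ E2) as E3. rewrite !scaleN1r in E3.
  exact (G_add _ _ _ _ _ _ _ _ E1 E3).
Qed.

Lemma green_identity f f' h h' : G (f, f') (h, h') -> Cim (hs_inner f' f) = Cim (hs_inner h' h).
Proof.
  intro Hg. pose proof (proj1 (G_unitary _ _) Hg _ _ _ _ Hg) as E.
  apply (f_equal Cim) in E. simpl in E. rewrite (im_innerC f f'), (im_innerC h h') in *. lra.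
Qed.

Lemma G_seq_closed (f f' : nat -> H) (h h' : nat -> K) f0 f0' h0 h0' :
  (forall n, G (f n, f' n) (h n, h' n)) -> cv f f0 -> cv f' f0' -> cv h h0 -> cv h' h0' ->
  G (f0, f0') (h0, h0').
Proof.
  intros Gn Cf Cf' Ch Ch'. apply G_unitary. intros g g' m m' Gg.
  apply (cv_inner_identity _ _ _ _ f f' h h'); auto.
  intro n. exact (proj1 (G_unitary _ _) (Gn n) _ _ _ _ Gg).
Qed.

(* [shifted_pair lam (f, h) p] means [p = (f' - lam f, - (h' + lam h))] for some
   [G (f, f') (h, h')]. *)
Definition shifted_pair (lam : Cx) (w p : prod_space H K) : Prop :=
  G (fst w, hs_add (fst p) (hs_scal lam (fst w)))
    (snd w, hs_opp (hs_add (snd p) (hs_scal lam (snd w)))).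

Definition in_shifted_range (lam : Cx) (p : prod_space H K) : Prop :=
  exists w, shifted_pair lam w p.

Lemma shifted_pair_add lam w1 p1 w2 p2 : shifted_pair lam w1 p1 -> shifted_pair lam w2 p2 ->
  shifted_pair lam (hs_add w1 w2) (hs_add p1 p2).
Proof.
  intros E1 E2. pose proof (G_add _ _ _ _ _ _ _ _ E1 E2) as E. unfold shifted_pair. simpl.
  rewrite <- opprD, addrACA, <- hs_scalDr, addrACA, <- hs_scalDr in E. exact E.
Qed.

Lemma shifted_pair_scal lam c w p : shifted_pair lam w p ->
  shifted_pair lam (hs_scal c w) (hs_scal c p).
Proof.
  intro E. pose proof (G_scal c _ _ _ _ E) as E'. unfold shifted_pair. simpl.
  rewrite scalerN, !hs_scalDr, !hs_scalA in E'.
  replace (Cmul c lam) with (Cmul lam c) in E' by cx_ring.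
  rewrite <- !hs_scalA in E'. exact E'.
Qed.

Lemma shifted_pair_sub lam w1 p1 w2 p2 : shifted_pair lam w1 p1 -> shifted_pair lam w2 p2 ->
  shifted_pair lam (hsub w1 w2) (hsub p1 p2).
Proof.
  intros E1 E2. unfold hsub. rewrite <- !scaleN1r.
  apply shifted_pair_add, shifted_pair_scal; assumption.
Qed.

Lemma shifted_bound lam w p : shifted_pair lam w p ->
  Cim lam * Cim lam * ns w <= 2 * ns p.
Proof.
  (* Green's identity gives [Im lam (|y|^2 + |a|^2) = - Im ((phi, y) + (psi, a))];
     conclude by Cauchy-Schwarz. *)
  destruct w as [y a], p as [phi psi]. intro Hg.
  change (@ns (prod_space H K) (y, a)) with (ns y + ns a).
  change (@ns (prod_space H K) (phi, psi)) with (ns phi + ns psi).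
  pose proof (green_identity _ _ _ _ Hg) as E. simpl in E.
  rewrite hs_innerDl, inner_oppl, hs_innerDl in E. simpl in E. rewrite !im_scal_inner in E.
  set (p := Cim (hs_inner phi y)) in *. set (q := Cim (hs_inner psi a)) in *.
  pose proof (cauchy_schwarz_im phi y) as C1. pose proof (cauchy_schwarz_im psi a) as C2.
  fold p q in C1, C2.
  pose proof (ns_ge0 y). pose proof (ns_ge0 a). pose proof (ns_ge0 phi). pose proof (ns_ge0 psi).
  set (c := Cim lam) in *. set (Y := ns y + ns a).
  assert (HY : c * Y = - (p + q)) by (unfold Y; lra).
  assert (Hsq : c * c * Y * Y <= 2 * (ns phi + ns psi) * Y).
  { replace (c * c * Y * Y) with ((c * Y) * (c * Y)) by ring. rewrite HY.
    assert (ns phi * ns y + ns psi * ns a <= (ns phi + ns psi) * Y) by (unfold Y; nra).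
    pose proof (Rle_0_sqr (p - q)). unfold Rsqr in *. lra. }
  destruct (Req_dec Y 0) as [HY0 | HY0].
  - rewrite HY0. nra.
  - apply Rmult_le_reg_r with Y; [unfold Y in *; lra | exact Hsq].
Qed.

Lemma shifted_range_subspace lam : subspace (in_shifted_range lam).
Proof.
  split; [|split].
  - exists hs_zero. unfold shifted_pair. simpl. rewrite !scaler0, !hs_add0, oppr0. exact G_zero.
  - intros p q [w1 E1] [w2 E2]. exists (hs_add w1 w2). apply shifted_pair_add; assumption.
  - intros c p [w E]. exists (hs_scal c w). apply shifted_pair_scal. exact E.
Qed.

Lemma shifted_range_closed lam : Cim lam <> 0 -> seq_closed (in_shifted_range lam).
Proof.
  intros Hlam u l Hu Hl.
  destruct (choice (fun n w => shifted_pair lam w (u n)) Hu) as [w Hw].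
  assert (Hc : 0 < Cim lam * Cim lam / 2)
    by (pose proof (Rsqr_pos_lt _ Hlam); unfold Rsqr in *; lra).
  assert (Cw : cauchy w).
  { apply (cauchy_of_ns_le _ Hc w u); [|exact (cv_cauchy _ _ Hl)]. intros n k.
    pose proof (shifted_bound _ _ _ (shifted_pair_sub _ _ _ _ _ (Hw n) (Hw k))). lra. }
  destruct (cauchy_cv w Cw) as [w0 Hw0]. exists w0.
  destruct (cv_prod _ _ Hw0) as [Cy Ca]. destruct (cv_prod _ _ Hl) as [Cphi Cpsi].
  apply (G_seq_closed _ _ _ _ _ _ _ _ Hw); auto using cv_add, cv_scal, cv_opp.
Qed.

Lemma shifted_range_orthogonal lam : Cim lam <> 0 -> forall z : prod_space H K,
  (forall s, in_shifted_range lam s -> hs_inner s z = C0) -> z = hs_zero.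
Proof.
  intros Hlam [u v] Horth.
  assert (Hk : brel_Kadj G (v, hs_scal (Copp (Cconj lam)) v) (u, hs_scal (Cconj lam) u)).
  { simpl. intros f f' h h' Hg.
    assert (Hs : in_shifted_range lam (hsub f' (hs_scal lam f), hsub (hs_opp h') (hs_scal lam h))).
    { exists (f, h). unfold shifted_pair. simpl. rewrite !subrK, opprK. exact Hg. }
    specialize (Horth _ Hs). simpl in Horth. unfold pinner in Horth. simpl in Horth.
    rewrite !inner_subl, !hs_innerZl, inner_oppl in Horth. rewrite !inner_scalr.
    apply (f_equal Cre) in Horth as Hr. apply (f_equal Cim) in Horth as Hi.
    apply Cx_ext; simpl in *; nra. }
  apply G_unitary in Hk. pose proof (green_identity _ _ _ _ Hk) as E.
  rewrite !im_scal_inner in E. simpl in E.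
  pose proof (ns_ge0 u). pose proof (ns_ge0 v).
  assert (Hsum : Cim lam * (ns u + ns v) = 0) by lra.
  apply Rmult_integral in Hsum as [Hl | Hsum]; [contradiction|].
  change ((u, v) = (hs_zero, hs_zero)). f_equal; apply ns_eq0; lra.
Qed.

Lemma shifted_range_total lam : Cim lam <> 0 -> forall p, in_shifted_range lam p.
Proof.
  intro Hlam. apply closed_subspace_total.
  - apply shifted_range_subspace.
  - apply shifted_range_closed, Hlam.
  - apply shifted_range_orthogonal, Hlam.
Qed.

Lemma weyl_null_limit lam : Cim lam <> 0 -> weyl_condition G lam ->
  forall (f f' : nat -> H) (h h' : nat -> K) l,
  (forall n, G (f n, f' n) (h n, h' n)) -> cv f hs_zero -> cv f' hs_zero -> cv h l ->
  l = hs_zero.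
Proof.
  intros Hlam HW f f' h h' l Gn Cf Cf' Ch.
  set (phi := fun n => hsub (f' n) (hs_scal lam (f n))).
  (* [w n] is small because [phi n] is, and subtracting it makes [f'_n = lam f_n] *)
  destruct (choice (fun n w => shifted_pair lam w (phi n, hs_zero))) as [w Hw].
  { intro n. apply shifted_range_total, Hlam. }
  assert (Hc : 0 < Cim lam * Cim lam / 2)
    by (pose proof (Rsqr_pos_lt _ Hlam); unfold Rsqr in *; lra).
  assert (Cw : cv w hs_zero).
  { apply (cv0_of_ns_le _ Hc w (fun n => (phi n, hs_zero) : prod_space H K)).
    - intro n. pose proof (shifted_bound _ _ _ (Hw n)). lra.
    - change (@hs_zero (prod_space H K)) with (@hs_zero H, @hs_zero K). apply cv_pair.
      + pose proof (cv_sub _ _ _ _ Cf' (cv_scal lam _ _ Cf)) as C.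
        rewrite scaler0, subrr in C. exact C.
      + apply cv_const. }
  destruct (cv_prod _ _ Cw) as [Cy Ca]. simpl in Cy, Ca.
  set (e := fun n => hsub (f n) (fst (w n))).
  assert (Ge : forall n, G (e n, hs_scal lam (e n))
      (hsub (h n) (snd (w n)), hsub (h' n) (hs_opp (hs_add hs_zero (hs_scal lam (snd (w n))))))).
  { intro n. pose proof (G_sub _ _ _ _ _ _ _ _ (Gn n) (Hw n)) as E. simpl in E.
    replace (hs_scal lam (e n)) with (hsub (f' n) (hs_add (phi n) (hs_scal lam (fst (w n))))).
    - exact E.
    - unfold e, phi. rewrite subrDr, subKr, scalerB. reflexivity. }
  apply (HW (fun n => hsub (h n) (snd (w n)))
            (fun n => hsub (h' n) (hs_opp (hs_add hs_zero (hs_scal lam (snd (w n))))))).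
  - intro n. exists (e n). apply Ge.
  - apply hconv_cv. pose proof (cv_sub _ _ _ _ Ch Ca) as C. rewrite subr0 in C. exact C.
  - assert (Ce : cv e hs_zero).
    { pose proof (cv_sub _ _ _ _ Cf Cy) as C. rewrite subrr in C. exact C. }
    apply cv0_ns in Ce.
    apply (Un_cv_ext (fun n => Cim lam * ns (e n))).
    + intro n. rewrite <- im_scal_inner. apply green_identity, Ge.
    + rewrite <- (Rmult_0_r (Cim lam)). apply CV_mult; [apply cv_cst | exact Ce].
Qed.

Lemma weyl_of_closable lam : Cim lam <> 0 -> closable_Gamma0 G -> weyl_condition G lam.
Proof.
  intros Hlam Hcl h k hl Hw Hh Him.
  destruct (choice (fun n f => G (f, hs_scal lam f) (h n, k n)) Hw) as [f Hf].
  assert (Cf : cv f hs_zero).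
  { apply cv0_ns. apply (Un_cv_ext (fun n => / Cim lam * Cim (hs_inner (k n) (h n)))).
    - intro n. rewrite <- (green_identity _ _ _ _ (Hf n)), im_scal_inner. field. exact Hlam.
    - rewrite <- (Rmult_0_r (/ Cim lam)). apply CV_mult; [apply cv_cst | exact Him]. }
  apply (Hcl (hs_zero, hs_zero)); apply closure_HHK_cv.
  - exists (fun n => (f n, hs_scal lam (f n))), h. split; [|split; [|split]].
    + intro n. exists (k n). apply Hf.
    + exact Cf.
    + rewrite <- (scaler0 lam). apply cv_scal, Cf.
    + apply hconv_cv, Hh.
  - exists (fun _ => (hs_zero, hs_zero)), (fun _ => hs_zero).
    split; [intro n; exists hs_zero; exact G_zero | repeat split; apply cv_const].
Qed.

Lemma closable_of_weyl lam : Cim lam <> 0 -> weyl_condition G lam -> closable_Gamma0 G.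
Proof.
  intros Hlam HW x y1 y2 C1 C2.
  apply closure_HHK_cv in C1 as (u1 & w1 & S1 & A1 & B1 & D1).
  apply closure_HHK_cv in C2 as (u2 & w2 & S2 & A2 & B2 & D2).
  destruct (choice (fun n k => G (fst (u1 n), snd (u1 n)) (w1 n, k))) as [k1 Hk1].
  { intro n. destruct (S1 n) as [k Hk]. exists k. rewrite <- surjective_pairing. exact Hk. }
  destruct (choice (fun n k => G (fst (u2 n), snd (u2 n)) (w2 n, k))) as [k2 Hk2].
  { intro n. destruct (S2 n) as [k Hk]. exists k. rewrite <- surjective_pairing. exact Hk. }
  apply subr0_eq, (weyl_null_limit lam Hlam HW
    (fun n => hsub (fst (u1 n)) (fst (u2 n))) (fun n => hsub (snd (u1 n)) (snd (u2 n)))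
    (fun n => hsub (w1 n) (w2 n)) (fun n => hsub (k1 n) (k2 n))).
  - intro n. apply G_sub; [apply Hk1 | apply Hk2].
  - rewrite <- (subrr (fst x)). apply cv_sub; assumption.
  - rewrite <- (subrr (snd x)). apply cv_sub; assumption.
  - apply cv_sub; assumption.
Qed.

End UnitaryRelation.

Theorem mainTheorem9 (H K : HilbertSpace) (A : lrel H) (G : brel H K) :
  closed_symmetric_relation A ->
  unitary_boundary_triple A G ->
  (closable_Gamma0 G <-> (exists lam : Cx, Cim lam <> 0 /\ weyl_condition G lam)) /\
  (closable_Gamma0 G <-> (forall lam : Cx, Cim lam <> 0 -> weyl_condition G lam)).
Proof.
  intros _ (G_linear & _ & _ & _ & G_unitary).
  assert (Hi : Cim (mkCx 0 1) <> 0) by (simpl; lra).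
  split; split.
  - intro Hcl. exists (mkCx 0 1). split; [exact Hi|].
    exact (weyl_of_closable G G_linear G_unitary _ Hi Hcl).
  - intros (lam & Hlam & HW). exact (closable_of_weyl G G_linear G_unitary lam Hlam HW).
  - intros Hcl lam Hlam. exact (weyl_of_closable G G_linear G_unitary lam Hlam Hcl).
  - intro HW. exact (closable_of_weyl G G_linear G_unitary _ Hi (HW _ Hi)).
Qed.
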